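(* Let $P:\mathcal{C}^{\mathrm{op}}\to\mathbf{Pos}$ be a Gödel doctrine. Then for all objects $I,U,X,V,Y$ of $\mathcal{C}$ and all quantifier-free predicates $\psi_D\in P(I\times U\times X)$ and $\phi_D\in P(I\times V\times Y)$ we have \[ i:I\;|\;\exists u.\forall x.\,\psi_D(i,u,x)\vdash\exists v.\forall y.\,\phi_D(i,v,y)\] if and only if there exist arrows $f_0:I\times U\to V$ and $f_1:I\times U\times Y\to X$ of $\mathcal{C}$ such that \[ u:U,y:Y,i:I\;|\;\psi_D(i,u,f_1(i,u,y))\vdash\phi_D(i,f_0(i,u),y).\]
   Context: A doctrine is a functor $P:\mathcal{C}^{\mathrm{op}}\to\mathbf{Pos}$ where $\mathcal{C}$ has finite products; $P_f$ denotes reindexing along $f$. $P$ is existential (resp. universal) if for every product projection $\pi_i:A_1\times A_2\to A_i$ the map $P_{\pi_i}$ has a left adjoint $\exists_{\pi_i}$ (resp. right adjoint $\forall_{\pi_i}$) satisfying Beck–Chevalley: for every pullback of a projection $\pi:X\to A$ along $f:A'\to A$, with projection $\pi':X'\to A'$ and $f':X'\to X$, $\exists_{\pi'}P_{f'}\beta=P_f\exists_\pi\beta$ (resp. $\forall_{\pi'}P_{f'}\beta=P_f\forall_\pi\beta$). Notation: $a_1:A_1,\dots,a_n:A_n\;|\;\phi\vdash\psi$ means $\phi\le\psi$ in $P(A_1\times\dots\times A_n)$; $\exists b.\psi(a,b)$, $\forall b.\psi(a,b)$ denote $\exists_{\pi_A}\psi$, $\forall_{\pi_A}\psi$; substitution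 of terms (arrows) is reindexing. In an existential doctrine, $\alpha\in P(A)$ is an existential splitting if for every $B$ and $\beta\in P(A\times B)$ with $\alpha\le\exists_{\pi_A}\beta$ there is $g:A\to B$ with $\alpha\le P_{\langle1_A,g\rangle}\beta$; $\alpha\in P(I)$ is existential-free if $P_f\alpha$ is an existential splitting for all $f:A\to I$. In a universal doctrine $Q$, $\alpha\in Q(A)$ is a universal splitting if for every $B$ and $\beta\in Q(A\times B)$ with $\forall_{\pi_A}\beta\le\alpha$ there is $g:A\to B$ with $Q_{\langle1_A,g\rangle}\beta\le\alpha$; $\alpha\in Q(I)$ is universal-free if $Q_f\alpha$ is a universal splitting for all $f:A\to I$. Enough existential-free (resp. universal-free) predicates: every $\alpha\in P(I)$ equals $\exists_{\pi_I}\beta$ (resp. $\forall_{\pi_I}\beta$) for some object $A$ and existential-free (resp. universal-free) $\beta\in P(I\times A)$. A Gödel doctrine is a doctrine $P$ such that: (1) $\mathcal{C}$ is cartesian closed; (2) $P$ is existential and universal; (3) $P$ has enough existential-free predicates; (4) if $\alpha$ is existential-free then $\forall_\pi\alpha$ is existential-free for every projection $\pi$; (5) the sub-doctrine $P'$ of existential-free predicates (universal by (4)) has enough universal-free predicates. A predicate is quantifier-free if it is existential-free in $P$ and universal-free in $P'$. *)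

Set Implicit Arguments.
Unset Strict Implicit.

Record FPCat := {
  ob : Type;
  hom : ob -> ob -> Type;
  idm : forall A, hom A A;
  comp : forall A B D, hom B D -> hom A B -> hom A D;
  comp_id_l : forall A B (f : hom A B), comp (idm B) f = f;
  comp_id_r : forall A B (f : hom A B), comp f (idm A) = f;
  comp_assoc : forall A B D E (h : hom D E) (g : hom B D) (f : hom A B),
      comp h (comp g f) = comp (comp h g) f;
  one : ob;
  bang : forall A, hom A one;
  bang_uniq : forall A (f : hom A one), f = bang A;
  prod : ob -> ob -> ob;
  pi1 : forall A B, hom (prod A B) A;
  pi2 : forall A B, hom (prod A B) B;
  pair : forall Z A B, hom Z A -> hom Z B -> hom Z (prod A B);
  pi1_pair : forall Z A B (f : hom Z A) (g : hom Z B), comp (pi1 A B) (pair f g) = f;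
  pi2_pair : forall Z A B (f : hom Z A) (g : hom Z B), comp (pi2 A B) (pair f g) = g;
  pair_uniq : forall Z A B (h : hom Z (prod A B)),
      h = pair (comp (pi1 A B) h) (comp (pi2 A B) h)
}.

Arguments hom : clear implicits.
Arguments idm {_} A.
Arguments comp {_ A B D} _ _.
Arguments bang {_} A.
Arguments prod {_} _ _.
Arguments pi1 {_} A B.
Arguments pi2 {_} A B.
Arguments pair {_ Z A B} _ _.
Arguments one {_}.

Definition prodmap {C : FPCat} {A A' B B' : ob C} (f : hom C A A') (g : hom C B B')
  : hom C (prod A B) (prod A' B') :=
  pair (comp f (pi1 A B)) (comp g (pi2 A B)).

Record Exponentials (C : FPCat) := {
  expo : ob C -> ob C -> ob C;
  ev : forall A B, hom C (prod (expo A B) A) B;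
  lam : forall Z A B, hom C (prod Z A) B -> hom C Z (expo A B);
  ev_lam : forall Z A B (f : hom C (prod Z A) B),
      comp (ev A B) (prodmap (lam f) (idm A)) = f;
  lam_uniq : forall Z A B (g : hom C Z (expo A B)),
      g = lam (comp (ev A B) (prodmap g (idm A)))
}.

Record Doctrine (C : FPCat) := {
  pred : ob C -> Type;
  ple : forall A, pred A -> pred A -> Prop;
  ple_refl : forall A (a : pred A), ple a a;
  ple_trans : forall A (a b c : pred A), ple a b -> ple b c -> ple a c;
  ple_antisym : forall A (a b : pred A), ple a b -> ple b a -> a = b;
  reidx : forall A B, hom C A B -> pred B -> pred A;
  reidx_mono : forall A B (f : hom C A B) (a b : pred B), ple a b -> ple (reidx f a) (reidx f b);
  reidx_id : forall A (a : pred A), reidx (idm A) a = a;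
  reidx_comp : forall A B D (f : hom C A B) (g : hom C B D) (a : pred D),
      reidx (comp g f) a = reidx f (reidx g a)
}.

Arguments pred {_} _ _.
Arguments ple {_ _ A} _ _.
Arguments reidx {_ _ A B} _ _.

Record ExistentialStr (C : FPCat) (P : Doctrine C) := {
  ex1 : forall A B, pred P (prod A B) -> pred P A;
  ex1_adj : forall A B (b : pred P (prod A B)) (a : pred P A),
      ple (ex1 b) a <-> ple b (reidx (pi1 A B) a);
  ex1_BC : forall A A' B (f : hom C A' A) (b : pred P (prod A B)),
      ex1 (reidx (prodmap f (idm B)) b) = reidx f (ex1 b);
  ex2 : forall A B, pred P (prod A B) -> pred P B;
  ex2_adj : forall A B (b : pred P (prod A B)) (a : pred P B),
      ple (ex2 b) a <-> ple b (reidx (pi2 A B) a);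
  ex2_BC : forall A B B' (f : hom C B' B) (b : pred P (prod A B)),
      ex2 (reidx (prodmap (idm A) f) b) = reidx f (ex2 b)
}.

Record UniversalStr (C : FPCat) (P : Doctrine C) := {
  all1 : forall A B, pred P (prod A B) -> pred P A;
  all1_adj : forall A B (b : pred P (prod A B)) (a : pred P A),
      ple a (all1 b) <-> ple (reidx (pi1 A B) a) b;
  all1_BC : forall A A' B (f : hom C A' A) (b : pred P (prod A B)),
      all1 (reidx (prodmap f (idm B)) b) = reidx f (all1 b);
  all2 : forall A B, pred P (prod A B) -> pred P B;
  all2_adj : forall A B (b : pred P (prod A B)) (a : pred P B),
      ple a (all2 b) <-> ple (reidx (pi2 A B) a) b;
  all2_BC : forall A B B' (f : hom C B' B) (b : pred P (prod A B)),
      all2 (reidx (prodmap (idm A) f) b) = reidx f (all2 b)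
}.

Arguments ex1 {_ _} _ {A B} _.
Arguments ex2 {_ _} _ {A B} _.
Arguments all1 {_ _} _ {A B} _.
Arguments all2 {_ _} _ {A B} _.

Section Godel.
Context {C : FPCat} {P : Doctrine C} (E : ExistentialStr P) (U : UniversalStr P).

Definition ex_splitting {A : ob C} (a : pred P A) : Prop :=
  forall (B : ob C) (b : pred P (prod A B)),
    ple a (ex1 E b) -> exists g : hom C A B, ple a (reidx (pair (idm A) g) b).

Definition ex_free {I : ob C} (a : pred P I) : Prop :=
  forall (A : ob C) (f : hom C A I), ex_splitting (reidx f a).

Definition enough_ex_free : Prop :=
  forall (I : ob C) (a : pred P I),
    exists (A : ob C) (b : pred P (prod I A)), ex_free b /\ a = ex1 E b.

Definition all_preserves_ex_free : Prop :=
  forall (A B : ob C) (a : pred P (prod A B)),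
    ex_free a -> ex_free (all1 U a) /\ ex_free (all2 U a).

(* In the sub-doctrine P' of existential-free predicates (whose universal
   quantifiers are the restrictions of those of P, by condition (4)). *)
Definition un_splitting' {A : ob C} (a : pred P A) : Prop :=
  forall (B : ob C) (b : pred P (prod A B)), ex_free b ->
    ple (all1 U b) a -> exists g : hom C A B, ple (reidx (pair (idm A) g) b) a.

(* universal-free in P' (in particular, an element of P') *)
Definition un_free' {I : ob C} (a : pred P I) : Prop :=
  ex_free a /\ forall (A : ob C) (f : hom C A I), un_splitting' (reidx f a).

Definition enough_un_free' : Prop :=
  forall (I : ob C) (a : pred P I), ex_free a ->
    exists (A : ob C) (b : pred P (prod I A)), un_free' b /\ a = all1 U b.

Definition quantifier_free {I : ob C} (a : pred P I) : Prop :=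
  ex_free a /\ un_free' a.

(* Gödel doctrine: (1) C cartesian closed, (2) given by E and U,
   (3) enough existential-free, (4) forall preserves existential-free,
   (5) P' has enough universal-free predicates. *)
Definition godel_doctrine : Prop :=
  inhabited (Exponentials C) /\ enough_ex_free /\ all_preserves_ex_free /\ enough_un_free'.

End Godel.

From Stdlib Require Import Setoid.

(* Since [forall x. psi] is existential-free, it splits the existential
   quantifier in [forall x. psi(i,u,x) |- exists v. forall y. phi(i,v,y)],
   which yields [f0]; by adjunction this leaves
   [forall x. psi(i,u,x) |- phi(i,f0(i,u),y)].  There [phi] is universal-free
   among the existential-free predicates and [psi] is existential-free, so
   [phi] splits the universal quantifier on the left, which yields [f1].
   The converse only instantiates the quantifiers at [f0] and [f1]. *)

Section Products.
Context {C : FPCat}.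

Lemma comp_pair {Z A B W : ob C} (f : hom C Z A) (g : hom C Z B) (h : hom C W Z) :
  comp (pair f g) h = pair (comp f h) (comp g h).
Proof.
  rewrite (pair_uniq (comp (pair f g) h)), !comp_assoc, pi1_pair, pi2_pair.
  reflexivity.
Qed.

Lemma pair_comp_pi {Z A B : ob C} (h : hom C Z (prod A B)) :
  pair (comp (pi1 A B) h) (comp (pi2 A B) h) = h.
Proof. symmetry; apply pair_uniq. Qed.

Lemma pair_pi {A B : ob C} : pair (pi1 A B) (pi2 A B) = idm (prod A B).
Proof. rewrite <- (pair_comp_pi (idm (prod A B))), !comp_id_r. reflexivity. Qed.

Lemma prodmap_pair {Z A A' B B' : ob C} (f : hom C A A') (g : hom C B B')
    (h : hom C Z A) (k : hom C Z B) :
  comp (prodmap f g) (pair h k) = pair (comp f h) (comp g k).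
Proof.
  unfold prodmap. rewrite comp_pair, <- !comp_assoc, pi1_pair, pi2_pair.
  reflexivity.
Qed.

Lemma prodmap_id_pair {A A' B : ob C} (f : hom C A A') (g : hom C A B) :
  comp (prodmap f (idm B)) (pair (idm A) g) = pair f g.
Proof. rewrite prodmap_pair, comp_id_r, comp_id_l. reflexivity. Qed.

Definition ctx_i {I U Y : ob C} : hom C (prod (prod U Y) I) I :=
  pi2 (prod U Y) I.
Definition ctx_u {I U Y : ob C} : hom C (prod (prod U Y) I) U :=
  comp (pi1 U Y) (pi1 (prod U Y) I).
Definition ctx_y {I U Y : ob C} : hom C (prod (prod U Y) I) Y :=
  comp (pi2 U Y) (pi1 (prod U Y) I).

Definition ctx_reorder (I U Y : ob C) : hom C (prod (prod U Y) I) (prod (prod I U) Y) :=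
  pair (pair ctx_i ctx_u) ctx_y.

Definition ctx_reorder_inv (I U Y : ob C) : hom C (prod (prod I U) Y) (prod (prod U Y) I) :=
  pair (pair (comp (pi2 I U) (pi1 (prod I U) Y)) (pi2 (prod I U) Y))
       (comp (pi1 I U) (pi1 (prod I U) Y)).

Lemma ctx_reorder_section (I U Y : ob C) :
  comp (ctx_reorder I U Y) (ctx_reorder_inv I U Y) = idm _.
Proof.
  unfold ctx_reorder, ctx_reorder_inv, ctx_i, ctx_u, ctx_y.
  repeat rewrite ?comp_pair, <- ?comp_assoc, ?pi1_pair, ?pi2_pair,
    ?pair_comp_pi, ?pair_pi.
  reflexivity.
Qed.

End Products.

Section Quantifiers.
Context {C : FPCat} {P : Doctrine C} (E : ExistentialStr P) (U : UniversalStr P).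

Lemma reidx_pair_pi1 {Z A B : ob C} (f : hom C Z A) (g : hom C Z B) (a : pred P A) :
  reidx (pair f g) (reidx (pi1 A B) a) = reidx f a.
Proof. rewrite <- reidx_comp, pi1_pair. reflexivity. Qed.

Lemma reidx_section_le {A B : ob C} {m : hom C A B} {m' : hom C B A} (a b : pred P B) :
  comp m m' = idm B -> (ple (reidx m a) (reidx m b) <-> ple a b).
Proof.
  intro Hmm'; split; intro H.
  - apply (reidx_mono m') in H.
    rewrite <- !reidx_comp, Hmm', !reidx_id in H. exact H.
  - apply reidx_mono, H.
Qed.

Lemma le_reidx_ex1 {A B : ob C} (b : pred P (prod A B)) :
  ple b (reidx (pi1 A B) (ex1 E b)).
Proof. apply (ex1_adj E), ple_refl. Qed.

Lemma reidx_all1_le {A B : ob C} (b : pred P (prod A B)) :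
  ple (reidx (pi1 A B) (all1 U b)) b.
Proof. apply (all1_adj U), ple_refl. Qed.

Lemma reidx_pair_le_ex1 {Z A B : ob C} (f : hom C Z A) (g : hom C Z B)
    (b : pred P (prod A B)) :
  ple (reidx (pair f g) b) (reidx f (ex1 E b)).
Proof. rewrite <- (reidx_pair_pi1 f g). apply reidx_mono, le_reidx_ex1. Qed.

Lemma reidx_all1_le_pair {Z A B : ob C} (f : hom C Z A) (g : hom C Z B)
    (b : pred P (prod A B)) :
  ple (reidx f (all1 U b)) (reidx (pair f g) b).
Proof. rewrite <- (reidx_pair_pi1 f g). apply reidx_mono, reidx_all1_le. Qed.

Lemma le_reidx_all1 {Z A B : ob C} (f : hom C Z A) (a : pred P Z)
    (b : pred P (prod A B)) :
  ple a (reidx f (all1 U b)) <-> ple (reidx (pi1 Z B) a) (reidx (prodmap f (idm B)) b).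
Proof. rewrite <- (all1_BC U). apply (all1_adj U). Qed.

Lemma ex_free_reidx {Z A : ob C} (f : hom C Z A) {a : pred P A} :
  ex_free E a -> ex_free E (reidx f a).
Proof. intros Ha W g. rewrite <- reidx_comp. apply Ha. Qed.

Lemma ex_free_splitting {A : ob C} {a : pred P A} : ex_free E a -> ex_splitting E a.
Proof. intro Ha. rewrite <- (reidx_id a). apply Ha. Qed.

Lemma ex_splitting_le_reidx_ex1 {Z A B : ob C} {a : pred P Z} {f : hom C Z A}
    {b : pred P (prod A B)} :
  ex_splitting E a -> ple a (reidx f (ex1 E b)) ->
  exists g : hom C Z B, ple a (reidx (pair f g) b).
Proof.
  intros Ha H. rewrite <- (ex1_BC E) in H.
  destruct (Ha B _ H) as [g Hg]. exists g.
  rewrite <- reidx_comp, prodmap_id_pair in Hg. exact Hg.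
Qed.

Lemma un_splitting'_reidx_all1_le {Z A B : ob C} {a : pred P Z} {f : hom C Z A}
    {b : pred P (prod A B)} :
  un_splitting' E U a -> ex_free E b -> ple (reidx f (all1 U b)) a ->
  exists g : hom C Z B, ple (reidx (pair f g) b) a.
Proof.
  intros Ha Hb H. rewrite <- (all1_BC U) in H.
  destruct (Ha B _ (ex_free_reidx _ Hb) H) as [g Hg]. exists g.
  rewrite <- reidx_comp, prodmap_id_pair in Hg. exact Hg.
Qed.

Section Skolem.
Context {I Uo X V Y : ob C}.
Variables (psi : pred P (prod (prod I Uo) X)) (phi : pred P (prod (prod I V) Y)).

Definition skolem_le (f0 : hom C (prod I Uo) V) (f1 : hom C (prod (prod I Uo) Y) X) : Prop :=
  ple (reidx (pair (pi1 (prod I Uo) Y) f1) psi)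
      (reidx (prodmap (pair (pi1 I Uo) f0) (idm Y)) phi).

Lemma skolem_le_ex_all f0 f1 :
  skolem_le f0 f1 -> ple (ex1 E (all1 U psi)) (ex1 E (all1 U phi)).
Proof.
  intro H. apply (ex1_adj E).
  apply ple_trans with (reidx (pair (pi1 I Uo) f0) (all1 U phi)).
  - apply le_reidx_all1.
    exact (ple_trans (reidx_all1_le_pair _ f1 psi) H).
  - apply reidx_pair_le_ex1.
Qed.

Lemma ex_all_le_skolem :
  ex_free E psi -> ex_free E (all1 U psi) -> un_free' E U phi ->
  ple (ex1 E (all1 U psi)) (ex1 E (all1 U phi)) -> exists f0 f1, skolem_le f0 f1.
Proof.
  intros Hpsi Hall_psi [_ Hphi] H.
  apply (ex1_adj E) in H.
  destruct (ex_splitting_le_reidx_ex1 (ex_free_splitting Hall_psi) H) as [f0 H0].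
  apply le_reidx_all1 in H0.
  destruct (un_splitting'_reidx_all1_le (Hphi _ _) Hpsi H0) as [f1 H1].
  exists f0, f1. exact H1.
Qed.

Lemma skolem_le_reorder f0 f1 :
  skolem_le f0 f1 <->
  ple (reidx (pair (pair ctx_i ctx_u) (comp f1 (ctx_reorder I Uo Y))) psi)
      (reidx (pair (pair ctx_i (comp f0 (pair ctx_i ctx_u))) ctx_y) phi).
Proof.
  unfold skolem_le.
  rewrite <- (reidx_section_le _ _ (ctx_reorder_section I Uo Y)), <- !reidx_comp.
  unfold ctx_reorder.
  rewrite comp_pair, prodmap_pair, comp_pair, !pi1_pair, comp_id_l.
  reflexivity.
Qed.

End Skolem.
End Quantifiers.

Theorem theorem2 (C : FPCat) (P : Doctrine C) (E : ExistentialStr P) (U : UniversalStr P)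
  (HG : godel_doctrine E U)
  (I Uo X V Y : ob C)
  (psi : pred P (prod (prod I Uo) X)) (phi : pred P (prod (prod I V) Y))
  (Hpsi : quantifier_free E U psi) (Hphi : quantifier_free E U phi) :
  ple (ex1 E (all1 U psi)) (ex1 E (all1 U phi)) <->
  exists (f0 : hom C (prod I Uo) V) (f1 : hom C (prod (prod I Uo) Y) X),
    (* context  u:Uo, y:Y, i:I  is the object (Uo x Y) x I *)
    let i := pi2 (prod Uo Y) I in
    let u := comp (pi1 Uo Y) (pi1 (prod Uo Y) I) in
    let y := comp (pi2 Uo Y) (pi1 (prod Uo Y) I) in
    ple (reidx (pair (pair i u) (comp f1 (pair (pair i u) y))) psi)
        (reidx (pair (pair i (comp f0 (pair i u))) y) phi).
Proof.
  destruct HG as [_ [_ [Hall _]]].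
  destruct Hpsi as [Hpsi _], Hphi as [_ Hphi].
  split.
  - intro H.
    destruct (ex_all_le_skolem E U psi phi Hpsi (proj1 (Hall _ _ psi Hpsi)) Hphi H)
      as [f0 [f1 Hf]].
    exists f0, f1. apply skolem_le_reorder, Hf.
  - intros [f0 [f1 Hf]].
    apply (skolem_le_ex_all E U psi phi f0 f1), skolem_le_reorder, Hf.
Qed.
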